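(* Let $N$ be a positive integer and let $x_1,\dots,x_N$ be real numbers with $0\le x_i\le 1$ for all $i$ and $\sum_{i=1}^N x_i=2$. Let $S$ be the sum of $x_ix_jx_k$ over all triples of indices $i<j<k$ such that $k-i$ is even and $j-i$ is odd. Then $S<1/3$. *)

From mathcomp Require Import all_boot all_order all_algebra.
Set Implicit Arguments. Unset Strict Implicit. Unset Printing Implicit Defensive.
Import Order.TTheory GRing.Theory Num.Theory.
Local Open Scope ring_scope.

(* S = sum over i<j<k with k-i even and j-i odd of x_i x_j x_k.
   Indices are 0-based ordinals 'I_N (parities of differences unchanged). *)
Definition tripleS (R : ringType) (N : nat) (x : 'I_N -> R) : R :=
  \sum_(i < N) \sum_(j < N) \sum_(k < N)
    (if [&& (i < j)%N, (j < k)%N, ~~ odd (k - i)%N & odd (j - i)%N]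
     then x i * x j * x k else 0).

From mathcomp Require Import all_boot all_order all_algebra.
From mathcomp Require Import ring.
Import Order.TTheory GRing.Theory Num.Theory.
Local Open Scope ring_scope.
Set Implicit Arguments. Unset Strict Implicit. Unset Printing Implicit Defensive.

(* Let [P m] and [Q m] be the masses of the even- and odd-indexed weights among
   the first [m], with totals [O] and [E] = 2 - [O].  Grouping the triples by
   their middle index [j], [S] is the sum of [A_j * x_j * (T_j - A_j)], where
   [A_j] is the mass of parity opposite to [j] before [j] and [T_j] its total.
   With [h = (E - O) / 2], the cubic potential
     Phi(P, Q) = P Q (E - Q) + ((P - Q + h)^3 - 2 (h - Q)^3 + h^3) / 6
   grows at step [j] by exactly that term plus a gap ((w + a)^3 - w^3) / 6,
   where [a = x_j] and [w] is the current value of [P - Q + h] (before the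
   step for even [j], after it for odd [j]); the gap is positive when [a > 0].
   Since Phi runs from 0 to ((O + E) / 2)^3 / 3 = 1/3, [S] is 1/3 minus the
   positive total gap. *)


Section ParitySums.
Variables (R : nzRingType) (y : nat -> R).

Definition par_sum (b : bool) (m : nat) : R := \sum_(0 <= i < m | odd i == b) y i.

Lemma par_sumS b m : par_sum b m.+1 = par_sum b m + (if odd m == b then y m else 0).
Proof. by rewrite /par_sum big_mkcond big_nat_recr //= -big_mkcond. Qed.

Lemma sum_par_sum m : \sum_(0 <= i < m) y i = par_sum false m + par_sum true m.
Proof.
rewrite (bigID odd) /= addrC /par_sum.
by congr (_ + _); apply: eq_bigl => i; rewrite ?eqbF_neg ?eqb_id.
Qed.

Lemma par_sum_before N j : (j <= N)%N ->
  \sum_(0 <= i < N | (odd i != odd j) && (i < j)%N) y i = par_sum (~~ odd j) j.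
Proof.
move=> leJN; rewrite /par_sum (big_nat_widen _ _ _ _ _ leJN).
by apply: eq_bigl => i; case: (odd i); case: (odd j).
Qed.

Lemma par_sum_after N j : (j <= N)%N ->
  \sum_(0 <= k < N | (j < k)%N && (odd k != odd j)) y k
  = par_sum (~~ odd j) N - par_sum (~~ odd j) j.
Proof.
move=> leJN; rewrite [par_sum _ N](bigID (fun k => k < j)%N) /=.
rewrite -(big_nat_widen _ _ _ _ _ leJN) -/(par_sum _ j) addrC addrK.
apply: eq_bigl => k; rewrite -leqNgt.
case: ltngtP => [_|_|<-]; rewrite ?andbT ?andbF //.
  by case: (odd k); case: (odd j).
by case: (odd j).
Qed.

End ParitySums.

Lemma triple_parity_cond i j k :
  [&& (i < j)%N, (j < k)%N, ~~ odd (k - i) & odd (j - i)]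
  = ((odd i != odd j) && (i < j)%N) && ((j < k)%N && (odd k != odd j)).
Proof.
have [ltij|] := ltnP i j; last by rewrite !andbF.
have [ltjk|] := ltnP j k; last by rewrite !andbF.
rewrite !oddB ?(ltnW ltij) ?(ltnW (ltn_trans ltij ltjk)) //.
by case: (odd i); case: (odd j); case: (odd k).
Qed.

Section MiddleIndex.
Variables (R : nzRingType) (N : nat) (y : nat -> R).

Definition mid_term (j : nat) : R :=
  par_sum y (~~ odd j) j * y j * (par_sum y (~~ odd j) N - par_sum y (~~ odd j) j).

Lemma tripleS_mid_term (x : 'I_N -> R) : (forall i : 'I_N, x i = y i) ->
  tripleS x = \sum_(0 <= j < N) mid_term j.
Proof.
move=> xE; rewrite /tripleS exchange_big big_mkord; apply: eq_bigr => j _.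
have leJN : (j <= N)%N := ltnW (ltn_ord j).
rewrite /mid_term -(par_sum_after y leJN) -(par_sum_before y leJN).
rewrite big_distrl big_distrl /= [RHS]big_mkcond big_mkord.
apply: eq_bigr => i _ /=; rewrite big_distrr /=.
under eq_bigr => k _ do rewrite triple_parity_cond !xE.
case: ifP => _ /=; last by rewrite big1.
by rewrite -big_mkcond big_mkord.
Qed.

End MiddleIndex.

Section Telescope.
Variables (R : numFieldType) (N : nat) (y : nat -> R).

Definition cube_gap (w a : R) : R := ((w + a) ^+ 3 - w ^+ 3) / 6.

Definition potential (E h p q : R) : R :=
  p * q * (E - q) + ((p - q + h) ^+ 3 - 2 * (h - q) ^+ 3 + h ^+ 3) / 6.

Let E := par_sum y true N.
Let h := (E - par_sum y false N) / 2.

Definition defect (j : nat) : R :=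
  let w := par_sum y false j - par_sum y true j + h in
  if odd j then cube_gap (w - y j) (y j) else cube_gap w (y j).

Lemma telescope m :
  \sum_(0 <= j < m) (mid_term N y j + defect j)
  = potential E h (par_sum y false m) (par_sum y true m).
Proof.
elim: m => [|m IH]; first by rewrite big_nil /par_sum !big_nil /potential; field.
rewrite big_nat_recr //= IH !par_sumS /mid_term /defect /cube_gap /potential /h /E.
by case: (odd m) => /=; field.
Qed.

Lemma potential_end :
  potential E h (par_sum y false N) E = ((par_sum y false N + E) / 2) ^+ 3 / 3.
Proof. by rewrite /potential /h; field. Qed.

End Telescope.

Section Positivity.
Variable R : realFieldType.

Lemma cube_gapE (w a : R) : cube_gap w a = a * (3 * (w + a / 2) ^+ 2 + a ^+ 2 / 4) / 6.
Proof. by rewrite /cube_gap; field. Qed.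

Lemma cube_gap_ge0 (w a : R) : 0 <= a -> 0 <= cube_gap w a.
Proof.
move=> a_ge0; rewrite cube_gapE divr_ge0 // mulr_ge0 // addr_ge0 //.
  by rewrite mulr_ge0 // sqr_ge0.
by rewrite divr_ge0 // sqr_ge0.
Qed.

Lemma cube_gap_gt0 (w a : R) : 0 < a -> 0 < cube_gap w a.
Proof.
move=> a_gt0; rewrite cube_gapE divr_gt0 // mulr_gt0 // ltr_wpDl //.
  by rewrite mulr_ge0 // sqr_ge0.
by rewrite divr_gt0 // exprn_gt0.
Qed.

Lemma sum_defect_gt0 N (y : nat -> R) : (forall j, 0 <= y j) ->
  \sum_(0 <= j < N) y j != 0 -> 0 < \sum_(0 <= j < N) defect N y j.
Proof.
move=> y_ge0 sum_y_neq0.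
have defect_ge0 j : 0 <= defect N y j.
  by rewrite /defect; case: ifP => _; apply: cube_gap_ge0.
rewrite lt_def sumr_ge0 // andbT psumr_neq0 //.
move: sum_y_neq0; rewrite psumr_neq0 //; apply: sub_has => j /= y_gt0.
by rewrite /defect; case: ifP => _; apply: cube_gap_gt0.
Qed.

End Positivity.

Theorem lemma2 (R : realFieldType) (N : nat) (x : 'I_N -> R)
  (hN : (0 < N)%N)
  (hx : forall i, 0 <= x i <= 1)
  (hsum : \sum_(i < N) x i = 2) :
  tripleS x < 1 / 3.
Proof.
case: N hN x hx hsum => [//|n] _ x hx hsum.
pose y i := x (inord i).
have xE (i : 'I_n.+1) : x i = y i by rewrite /y inord_val.
have y_ge0 j : 0 <= y j by case/andP: (hx (inord j)).
have sum_y : \sum_(0 <= i < n.+1) y i = 2.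
  by rewrite -hsum big_mkord; apply: eq_bigr => i _; rewrite xE.
have := telescope n.+1 y n.+1.
rewrite big_split /= potential_end -sum_par_sum sum_y divff ?pnatr_eq0 // expr1n.
move=> <-; rewrite (tripleS_mid_term xE) ltrDl sum_defect_gt0 // sum_y.
by rewrite pnatr_eq0.
Qed.
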